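(* Let $\mathbf{T}=(T_1,\dots,T_m)$ and $\mathbf{T}^0=(T^0_1,\dots,T^0_m)$ be real random vectors and $\mathcal{H}_0\subset[m]$ such that for every $i\in\mathcal{H}_0$, $(T_i,T_i^0\mid\mathbf{T}_{-i},\mathbf{T}^0_{-i})\stackrel{d}{=}(T_i^0,T_i\mid\mathbf{T}_{-i},\mathbf{T}^0_{-i})$. Let $g(\cdot;\mathbf{T},\mathbf{T}^0)$ be a (data-dependent) score function and define $U_i=g(T_i;\mathbf{T},\mathbf{T}^0)$, $U_i^0=g(T_i^0;\mathbf{T},\mathbf{T}^0)$, $i\in[m]$. For $\mathcal{J}\subset[m]$ let $(\mathbf{T},\mathbf{T}^0)_{\mathrm{swap}(\mathcal{J})}$ denote the pair of vectors obtained by swapping $T_i$ and $T_i^0$ for each $i\in\mathcal{J}$. If $g(\cdot;(\mathbf{T},\mathbf{T}^0)_{\mathrm{swap}(\mathcal{J})})=g(\cdot;(\mathbf{T},\mathbf{T}^0))$ for all $\mathcal{J}\subset[m]$, then for every $i\in\mathcal{H}_0$, $$(U_i,U_i^0\mid\mathbf{U}_{-i},\mathbf{U}^0_{-i})\stackrel{d}{=}(U_i^0,U_i\mid\mathbf{U}_{-i},\mathbf{U}^0_{-i}),$$ where $\mathbf{U}_{-i}=(U_k:k\ne i)$, $\mathbf{U}^0_{-i}=(U^0_k:k\ne i)$.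
   Context: For a vector $\mathbf{a}=(a_1,\dots,a_m)$, $\mathbf{a}_{-i}$ denotes the vector with the $i$-th entry removed. *)

From HB Require Import structures.
From mathcomp Require Import all_boot all_order all_algebra.
From mathcomp Require Import all_classical all_reals all_analysis.
Set Implicit Arguments. Unset Strict Implicit. Unset Printing Implicit Defensive.
Import Order.TTheory GRing.Theory Num.Theory.
Local Open Scope classical_set_scope.
Local Open Scope ring_scope.

(* A pair of vectors (t, t0) in R^m x R^m, with R^m = m.-tuple R carrying the
   product (coordinate-generated) sigma-algebra of the library. *)
Definition pairvec (R : realType) (m : nat) := (m.-tuple R * m.-tuple R)%type.

Definition swap_set (R : realType) (m : nat) (J : {set 'I_m})
    (p : pairvec R m) : pairvec R m :=
  ([tuple if k \in J then tnth p.2 k else tnth p.1 k | k < m],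
   [tuple if k \in J then tnth p.1 k else tnth p.2 k | k < m]).

(* Conditional equality in distribution given Z means equality of the joint
   laws of (pair, Z); here this is: the joint law of (X, X0) equals the
   joint law of (X, X0) with the i-th coordinates swapped. *)
Definition cond_swap_exch d (Omega : measurableType d) (R : realType)
    (P : probability Omega R) (m : nat)
    (X X0 : Omega -> m.-tuple R) (i : 'I_m) : Prop :=
  forall A : set (pairvec R m), measurable A ->
    P ((fun w => (X w, X0 w)) @^-1` A) =
    P ((fun w => swap_set [set i] (X w, X0 w)) @^-1` A).

Definition score_vec (R : realType) (m : nat) (g : R -> pairvec R m -> R)
    (x : m.-tuple R) (p : pairvec R m) : m.-tuple R :=
  [tuple g (tnth x k) p | k < m].

From HB Require Import structures.
From mathcomp Require Import all_boot all_order all_algebra.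
From mathcomp Require Import all_classical all_reals all_analysis.
Set Implicit Arguments. Unset Strict Implicit. Unset Printing Implicit Defensive.
Import Order.TTheory GRing.Theory Num.Theory.
Local Open Scope classical_set_scope.
Local Open Scope ring_scope.

(** The score map [(T, T0) |-> (U, U0)] is measurable and, because [g] is
    invariant under swaps, it commutes with [swap_set [set i]].  Hence the
    preimage under it of any event is an event whose probability is unchanged
    when [(T_i, T0_i)] is swapped, which is the exchangeability of
    [(U_i, U0_i)]. *)

Section ScoreMap.
Variables (R : realType) (m : nat) (g : R -> pairvec R m -> R).

Definition score_map (p : pairvec R m) : pairvec R m :=
  (score_vec g p.1 p, score_vec g p.2 p).

Lemma score_map_swap (J : {set 'I_m}) (p : pairvec R m) :
  g^~ (swap_set J p) = g^~ p ->
  score_map (swap_set J p) = swap_set J (score_map p).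
Proof.
move=> gJ; have gJx x : g x (swap_set J p) = g x p by rewrite -[LHS]/(g^~ _ x) gJ.
rewrite /score_map /score_vec [in LHS]/swap_set /=.
by congr pair; apply: eq_from_tnth => k; rewrite !tnth_mktuple gJx; case: ifP.
Qed.

Hypothesis mg : measurable_fun setT (fun q : R * pairvec R m => g q.1 q.2).

Lemma measurable_score_vec (x : pairvec R m -> m.-tuple R) :
  measurable_fun setT x -> measurable_fun setT (fun p => score_vec g (x p) p).
Proof.
move=> mx; apply/measurable_fun_tnthP => k.
have -> : @tnth m R ^~ k \o (fun p => score_vec g (x p) p) =
    (fun q : R * pairvec R m => g q.1 q.2) \o (fun p => (tnth (x p) k, p)).
  by apply: funext => p /=; rewrite tnth_mktuple.
apply: measurableT_comp => //; apply: measurable_fun_pair => //.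
exact: measurableT_comp (measurable_tnth k) mx.
Qed.

Lemma measurable_score_map : measurable_fun setT score_map.
Proof.
apply/measurable_fun_pairP; split.
- exact: measurable_score_vec measurable_fst.
- exact: measurable_score_vec measurable_snd.
Qed.

End ScoreMap.

Lemma cond_swap_exch_comp d (Omega : measurableType d) (R : realType)
    (P : probability Omega R) (m : nat) (X X0 : Omega -> m.-tuple R)
    (i : 'I_m) (F : pairvec R m -> pairvec R m) :
  measurable_fun setT F ->
  (forall p, F (swap_set [set i] p) = swap_set [set i] (F p)) ->
  cond_swap_exch P X X0 i ->
  cond_swap_exch P (fun w => (F (X w, X0 w)).1) (fun w => (F (X w, X0 w)).2) i.
Proof.
move=> mF Fswap exch A mA.
have mFA : measurable (F @^-1` A) by rewrite -[F @^-1` A]setTI; exact: mF.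
transitivity (P ((fun w => (X w, X0 w)) @^-1` (F @^-1` A))).
  by congr (P (_ @^-1` A)); apply: funext => w /=; rewrite -surjective_pairing.
rewrite (exch _ mFA).
by congr (P (_ @^-1` A)); apply: funext => w /=; rewrite -surjective_pairing Fswap.
Qed.

Theorem proposition1 (d : measure_display) (Omega : measurableType d)
  (R : realType) (P : probability Omega R) (m : nat)
  (T T0 : Omega -> m.-tuple R)
  (mT : measurable_fun setT T) (mT0 : measurable_fun setT T0)
  (H0 : {set 'I_m})
  (hexch : forall i, i \in H0 -> cond_swap_exch P T T0 i)
  (g : R -> pairvec R m -> R)
  (mg : measurable_fun setT (fun q : R * pairvec R m => g q.1 q.2))
  (ginv : forall (J : {set 'I_m}) (p : pairvec R m),
      g^~ (swap_set J p) = g^~ p) :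
  forall i, i \in H0 ->
    cond_swap_exch P
      (fun w => score_vec g (T w) (T w, T0 w))
      (fun w => score_vec g (T0 w) (T w, T0 w)) i.
Proof.
move=> i iH0.
have swapF p : score_map g (swap_set [set i] p) = swap_set [set i] (score_map g p).
  exact: score_map_swap.
exact: cond_swap_exch_comp (measurable_score_map mg) swapF (hexch i iH0).
Qed.
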